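(* Let $n\ge 1$ and let $P$ be a reachable position of $\mathrm{AGG}(n,A)$ containing at least one tile. Then there exist a nonempty cell $c$ of $P$, whose tile in $P$ has some value $v$, and a sequence of steps reaching $P$ from the initial position of the following form: first, a sequence of steps reaching the position $P'$ in which cell $c$ holds a tile of value $v$ and the other $n-1$ cells are empty; then a sequence of steps that never changes cell $c$ and uses only the other $n-1$ cells, forming a legal play of $\mathrm{AGG}(n-1,A)$ on those cells from its initial (all-empty) position, and reaching the position of $\mathrm{AGG}(n-1,A)$ obtained from $P$ by deleting cell $c$.
   Context: Let $A$ be a set of positive integers with $1\in A$ (the allowed tile values). For an integer $n\ge 0$, the abstract generalized 2048 game $\mathrm{AGG}(n,A)$ is played on $n$ indistinguishable cells. A position assigns to each cell either nothing (the cell is empty) or a tile carrying a value in $A$. The initial position has all cells empty. A step, which can be performed from any position having at least one empty cell, consists of: (i) placing a new tile of value $1$ into a chosen empty cell; then (ii) optionally choosing any collection of pairwise disjoint sets of nonempty cells such that the sum of the tile values in each chosen set belongs to $A$, and merging each chosen set into a single tile, whose value is that sum, placed in one cell of the set, the other cells of the set becoming empty. The game ends when, after a step, all cells are nonempty (no further step is then possible). A position is reachable if it can be obtained from the initial position by a finite sequence of steps. *)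

From mathcomp Require Import all_boot.
Set Implicit Arguments. Unset Strict Implicit. Unset Printing Implicit Defensive.

(* A position of AGG(n,A): each cell 'I_n is empty (None) or holds a tile
   with value v (Some v). *)
Definition position (n : nat) := {ffun 'I_n -> option nat}.

Definition init_pos (n : nat) : position n := [ffun _ => None].

Definition tval (o : option nat) : nat := if o is Some v then v else 0.

Definition set_sum n (Q : position n) (S : {set 'I_n}) : nat :=
  \sum_(x in S) tval (Q x).

Definition place n (P : position n) (e : 'I_n) : position n :=
  [ffun i => if i == e then Some 1 else P i].

(* One step of AGG(n,A) from P to R: place a 1 into an empty cell e, then
   merge a collection [ms] of pairwise disjoint nonempty sets of nonempty
   cells (each given with the cell m.2 in m.1 receiving the merged tile),
   the sum of the values of each set belonging to A. *)
Definition step n (A : nat -> Prop) (P R : position n) : Prop :=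
  exists e : 'I_n, P e = None /\
  exists ms : seq ({set 'I_n} * 'I_n),
    let Q := place P e in
    (forall m, m \in ms ->
        [/\ m.2 \in m.1,
            (forall x, x \in m.1 -> Q x <> None) &
            A (set_sum Q m.1)]) /\
    (forall i j, i < size ms -> j < size ms -> i <> j ->
        [disjoint (nth (set0, e) ms i).1 & (nth (set0, e) ms j).1]) /\
    (forall x : 'I_n,
        (forall m, m \in ms -> x \in m.1 ->
            R x = (if x == m.2 then Some (set_sum Q m.1) else None)) /\
        ((forall m, m \in ms -> x \notin m.1) -> R x = Q x)).

Definition reaches n (A : nat -> Prop) (P Q : position n) : Prop :=
  exists (k : nat) (f : nat -> position n),
    [/\ f 0 = P, f k = Q & forall i, i < k -> step A (f i) (f i.+1)].

Definition reachable n (A : nat -> Prop) (P : position n) : Prop :=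
  reaches A (init_pos n) P.

Definition insert_cell m (c : 'I_m.+1) (v : nat) (Q : position m)
  : position m.+1 :=
  [ffun i => if unlift c i is Some j then Q j else Some v].

Definition delete_cell m (c : 'I_m.+1) (P : position m.+1) : position m :=
  [ffun j => P (lift c j)].

(* Order the tiles of a reachable position of AGG(n, A) from oldest to youngest,
   a merged tile being as old as the oldest tile merged into it.  Then the i-th
   tile (from 0) is buildable with n - i empty cells: it can be recreated in any
   empty cell of any board having at least n - i empty cells, all other cells
   ending as they were.  A step preserves this: the new tile 1 comes last, and a
   merged tile is recreated by building its constituents, oldest first, in
   distinct empty cells and performing their merge during the last step.  So
   the oldest tile c is built alone on the empty board, and building the other
   tiles in order of age is a play of AGG(n - 1, A) on the cells other than c,
   which runs unchanged next to the tile in c. *)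

From mathcomp Require Import all_boot zify.

Set Implicit Arguments.
Unset Strict Implicit.
Unset Printing Implicit Defensive.

Section Reaches.

Variables (A : nat -> Prop) (n : nat).
Implicit Types P Q R : position n.

Lemma reaches_refl P : reaches A P P.
Proof. by exists 0, (fun _ => P). Qed.

Lemma reaches_stepr P Q R : reaches A P Q -> step A Q R -> reaches A P R.
Proof.
case=> k [f [f0 fk fs]] sQR.
exists k.+1, (fun i => if i <= k then f i else R); split; rewrite ?ltnn //.
move=> i; rewrite ltnS => ik; rewrite ik; case: (ltnP i k) => [lt|ki]; first exact: fs.
have -> : i = k by apply/eqP; rewrite eqn_leq ik.
by rewrite fk.
Qed.

Lemma step_reaches P Q : step A P Q -> reaches A P Q.
Proof. exact: reaches_stepr (reaches_refl P). Qed.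

Lemma reaches_ind (I : position n -> Prop) P Q :
  I P -> (forall X Y, I X -> step A X Y -> I Y) -> reaches A P Q -> I Q.
Proof.
move=> IP IS [k [f [f0 <- fs]]].
elim: k fs => [|k IHk] fs; first by rewrite f0.
by apply: IS (fs k (ltnSn k)); apply: IHk => i ik; apply: fs; rewrite ltnS ltnW.
Qed.

Lemma reaches_trans P Q R : reaches A P Q -> reaches A Q R -> reaches A P R.
Proof. by move=> rPQ; apply: reaches_ind => // X Y; apply: reaches_stepr. Qed.

Lemma reaches_last P Q :
  reaches A P Q -> P <> Q -> exists2 Q', reaches A P Q' & step A Q' Q.
Proof.
case=> [[|k]] [f [f0 fk fs]] PQ; first by case: PQ; rewrite -f0 -fk.
exists (f k); last by rewrite -fk; apply: fs.
by exists k, f; split => // i ik; apply: fs; rewrite ltnS ltnW.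
Qed.

End Reaches.

Lemma pairwise_sym_mem (T : eqType) (r : rel T) (s : seq T) x y :
  symmetric r -> pairwise r s -> x \in s -> y \in s -> x != y -> r x y.
Proof.
move=> rC; elim: s => // a s IHs; rewrite pairwise_cons => /andP [/allP ra ps].
rewrite !inE => /orP [/eqP->|xs] /orP [/eqP->|ys]; rewrite ?eqxx // => xy.
- exact: ra.
- by rewrite rC; apply: ra.
- exact: IHs.
Qed.

Lemma index_filter_le (T : eqType) (p : pred T) (s : seq T) x :
  p x -> index x (filter p s) <= index x s.
Proof.
move=> px; elim: s => //= a s IHs; case: (eqVneq a x) => [->|ax].
  by rewrite px /= eqxx.
by case: ifP => _ /=; rewrite ?(negbTE ax) ?ltnS // leqW.
Qed.

(* [undup] keeps the last occurrence of each item; [dedup] keeps the first. *)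
Definition dedup (T : eqType) (s : seq T) := rev (undup (rev s)).

Lemma dedup_cons (T : eqType) (x : T) s :
  dedup (x :: s) = x :: [seq y <- dedup s | y != x].
Proof. by rewrite /dedup rev_cons undup_rcons rev_rcons filter_rev. Qed.

Lemma mem_dedup (T : eqType) (s : seq T) : dedup s =i s.
Proof. by move=> x; rewrite mem_rev mem_undup mem_rev. Qed.

Lemma dedup_uniq (T : eqType) (s : seq T) : uniq (dedup s).
Proof. by rewrite rev_uniq undup_uniq. Qed.

Lemma index_dedup_map (T U : eqType) (f : T -> U) (s : seq T) y :
  uniq s -> y \in s ->
  index (f y) (dedup (map f s)) + index y [seq z <- s | f z == f y] <= index y s.
Proof.
elim: s => //= a s IHs /andP [aNs us]; rewrite dedup_cons inE.
case: (eqVneq y a) => [->|ya] /= ys; first by rewrite eqxx /= eqxx.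
have IH := IHs us ys; have ay : (a == y) = false by rewrite eq_sym (negbTE ya).
case: (eqVneq (f a) (f y)) => [_|fa] /=; first by rewrite ay; lia.
have : index (f y) [seq u <- dedup (map f s) | u != f a]
         <= index (f y) (dedup (map f s)).
  by apply: index_filter_le; rewrite /= eq_sym.
lia.
Qed.

(** * Anatomy of a step *)

Definition merges_disjoint n (ms : seq ({set 'I_n} * 'I_n)) :=
  pairwise (fun m m' : {set 'I_n} * 'I_n => [disjoint m.1 & m'.1]) ms.

(* [step] with the placed cell [e] and the merges [ms] exposed, disjointness of
   the merged sets being stated with [pairwise] instead of list indices. *)
Definition step_with n (A : nat -> Prop) (P R : position n) (e : 'I_n)
    (ms : seq ({set 'I_n} * 'I_n)) :=
  let Q := place P e in
  [/\ P e = None,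
      forall m, m \in ms ->
        [/\ m.2 \in m.1, forall x, x \in m.1 -> Q x <> None & A (set_sum Q m.1)],
      merges_disjoint ms,
      forall x m, m \in ms -> x \in m.1 ->
        R x = (if x == m.2 then Some (set_sum Q m.1) else None) &
      forall x, (forall m, m \in ms -> x \notin m.1) -> R x = Q x].

Lemma stepP n (A : nat -> Prop) (P R : position n) :
  step A P R <-> exists e ms, step_with A P R e ms.
Proof.
split => [[e [Pe [ms [hm [hd hR]]]]]|[e [ms [Pe hm hd hR hF]]]].
  exists e, ms; split => // [|x m mm xm|x]; last exact: (hR x).2.
    apply/(pairwiseP (set0, e)) => i j il jl ij; apply: hd => //; lia.
  exact: (hR x).1.
exists e; split => //; exists ms; split => //; split => [i j il jl ij|x]; last first.
  by split => [m|]; [exact: hR | exact: hF].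
have /(pairwiseP (set0, e)) dij := hd.
by case: (ltngtP i j) => [lt|lt|eq] //; [|rewrite disjoint_sym]; apply: dij.
Qed.

Definition owner n (ms : seq ({set 'I_n} * 'I_n)) (x : 'I_n) : 'I_n :=
  if [pick m | (m \in ms) && (x \in m.1)] is Some m then m.2 else x.

Definition tiles_in n (A : nat -> Prop) (P : position n) :=
  forall x, P x <> None -> A (tval (P x)).

Definition merge n (R : position n) (G : {set 'I_n}) (g : 'I_n) : position n :=
  [ffun x => if x \in G then (if x == g then Some (set_sum R G) else None)
             else R x].

Section StepAnatomy.

Variables (A : nat -> Prop) (n : nat) (P R : position n) (e : 'I_n).
Variable ms : seq ({set 'I_n} * 'I_n).
Hypothesis sPR : step_with A P R e ms.
Local Notation Q := (place P e).

Variant owner_spec x : 'I_n -> Prop :=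
  | OwnerMerged m of m \in ms & x \in m.1 : owner_spec x m.2
  | OwnerFree of (forall m, m \in ms -> x \notin m.1) : owner_spec x x.

Lemma ownerP x : owner_spec x (owner ms x).
Proof.
rewrite /owner; case: pickP => [m /andP [mm xm]|none]; first exact: OwnerMerged.
by apply: OwnerFree => m mm; apply/negP => xm; have := none m; rewrite mm xm.
Qed.

Lemma merge_set_uniq m m' x :
  m \in ms -> m' \in ms -> x \in m.1 -> x \in m'.1 -> m = m'.
Proof.
case: sPR => _ _ hd _ _ mm m'm xm xm'; apply/eqP/negPn/negP => mm'.
have sym : symmetric (fun m m' : {set 'I_n} * 'I_n => [disjoint m.1 & m'.1]).
  by move=> ? ?; rewrite disjoint_sym.
by have := disjointFr (pairwise_sym_mem sym hd mm m'm mm') xm; rewrite xm'.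
Qed.

Lemma owner_merged m x : m \in ms -> x \in m.1 -> owner ms x = m.2.
Proof.
move=> mm xm; case: ownerP => [m' m'm xm'|free].
  by rewrite (merge_set_uniq m'm mm xm' xm).
by have := free m mm; rewrite xm.
Qed.

Lemma owner_idem x : owner ms (owner ms x) = owner ms x.
Proof.
case: (sPR) => _ hm _ _ _; case: (ownerP x) => [m mm _|free].
  by apply: (owner_merged mm); case: (hm m mm).
by case: ownerP => // m mm xm; have := free m mm; rewrite xm.
Qed.

Lemma owner_tile x : R x <> None -> owner ms x = x.
Proof.
case: sPR => _ _ _ hR _; case: ownerP => // m mm xm.
by rewrite (hR _ _ mm xm); case: eqP.
Qed.

Lemma place_tile x : R x <> None -> Q x <> None.
Proof.
case: sPR => _ hm _ _ hF; case: (ownerP x) => [m mm xm|free]; last by rewrite hF.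
by case: (hm m mm) => _ + _ _; apply.
Qed.

Lemma tile_owner y : Q y <> None -> R (owner ms y) <> None.
Proof.
case: sPR => _ hm _ hR hF; case: ownerP => [m mm _|free]; last by rewrite hF.
by case: (hm m mm) => m2m _ _; rewrite (hR _ _ mm m2m) eqxx.
Qed.

Lemma tval_step x : tval (R x) = \sum_(y | owner ms y == x) tval (Q y).
Proof.
case: (sPR) => _ hm _ hR hF; case: (ownerP x) => [m mm xm|free].
  rewrite (hR x m mm xm); case: eqP => [xm2|xm2]; last first.
    rewrite big_pred0 // => y; apply/eqP => oy; apply: xm2.
    by rewrite -(owner_merged mm xm) -oy owner_idem.
  apply: eq_bigl => y; apply/idP/eqP => [ym|]; first by rewrite (owner_merged mm ym).
  case: ownerP => [m' m'm ym' m'x|_ -> //].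
  have xm' : x \in m'.1 by rewrite -m'x; case: (hm m' m'm).
  by rewrite -(merge_set_uniq m'm mm xm' xm).
rewrite (hF x free) (big_pred1 x) // => y /=.
apply/eqP/eqP => [|->]; last first.
  by case: ownerP => // m mm xm; have := free m mm; rewrite xm.
case: ownerP => // m mm _ m2x; case: (hm m mm) => m2m _ _.
by have := free m mm; rewrite -m2x m2m.
Qed.

Lemma step_tiles_in : A 1 -> tiles_in A P -> tiles_in A R.
Proof.
case: sPR => _ hm _ hR hF A1 hP x; case: (ownerP x) => [m mm xm|free].
  by rewrite (hR x m mm xm); case: eqP => // _ _; case: (hm m mm).
by rewrite hF // ffunE; case: eqP => // _; apply: hP.
Qed.

Lemma set_sum_owner_preim (G : {set 'I_n}) :
  set_sum Q [set y | owner ms y \in G] = set_sum R G.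
Proof.
rewrite /set_sum (eq_bigl (fun y => owner ms y \in G)) => [|y]; last by rewrite inE.
rewrite (partition_big (owner ms) (mem G)) //=; apply: eq_bigr => x xG.
by rewrite tval_step; apply: eq_bigl => y; case: eqP => [->|]; rewrite ?xG ?andbF.
Qed.

(* The merges of [ms] with target in [G] are replaced by one merge, into [g], of
   all the cells whose tiles end up in [G]. *)
Lemma step_merge (G : {set 'I_n}) g :
  (forall x, x \in G -> R x <> None) -> g \in G -> A (set_sum R G) ->
  step A P (merge R G g).
Proof.
move=> GR gG AG; case: (sPR) => Pe hm hd hR hF.
have ownG x : x \in G -> owner ms x = x by move=> xG; apply: owner_tile; apply: GR.
set H := [set y | owner ms y \in G].
set old := [seq m <- ms | m.2 \notin G].
have oldH m y : m \in old -> y \in m.1 -> y \notin H.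
  by rewrite mem_filter inE => /andP [m2G mm] ym; rewrite (owner_merged mm ym).
apply/stepP; exists e, ((H, g) :: old); split => //.
- move=> m; rewrite inE => /orP [/eqP -> /=|]; last first.
    by rewrite mem_filter => /andP [_]; apply: hm.
  split; [by rewrite inE ownG | move=> y; rewrite inE | by rewrite set_sum_owner_preim].
  case: (ownerP y) => [m' m'm ym _|_ /GR]; last exact: place_tile.
  by case: (hm m' m'm) => _ + _; apply.
- rewrite /merges_disjoint pairwise_cons (pairwise_filter _ hd) andbT.
  apply/allP => m mo; rewrite /= disjoint_sym disjoint_subset.
  by apply/subsetP => y ym; rewrite inE; apply: oldH mo ym.
- move=> x m; rewrite inE ffunE => /orP [/eqP -> /=|mo] xm.
    rewrite set_sum_owner_preim; case: ifP => // xNG.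
    have -> : (x == g) = false by apply/negbTE; apply: contraFN xNG => /eqP ->.
    apply/eqP; apply: contraT => /eqP Rx.
    by move: xm; rewrite inE (owner_tile Rx) xNG.
  move: (mo); rewrite mem_filter => /andP [m2G mm].
  have -> : (x \in G) = false.
    by apply/negbTE; apply: contra m2G => xG; rewrite -(owner_merged mm xm) ownG.
  exact: hR.
move=> x xfree; have xH : x \notin H := xfree (H, g) (mem_head _ _).
rewrite ffunE; have -> : (x \in G) = false.
  by apply/negbTE; apply: contra xH => xG; rewrite inE ownG.
apply: hF => m mm; apply/negP => xm.
have mo : m \in old.
  by rewrite mem_filter mm andbT -(owner_merged mm xm); move: xH; rewrite inE.
by have := xfree m; rewrite inE mo orbT xm => /(_ isT).
Qed.

End StepAnatomy.

(* A merge is only possible within a step: it is added to the last step. *)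
Lemma reaches_merge n (A : nat -> Prop) (X R : position n) (G : {set 'I_n}) g :
  reaches A X R -> X <> R -> (forall x, x \in G -> R x <> None) -> g \in G ->
  A (set_sum R G) -> reaches A X (merge R G g).
Proof.
move=> rXR XR GR gG AG; case: (reaches_last rXR XR) => Y rXY /stepP [e [ms sYR]].
exact: reaches_stepr rXY (step_merge sYR GR gG AG).
Qed.

(** * Buildable tiles *)

Definition put n (B : position n) (d : 'I_n) (v : nat) : position n :=
  [ffun x => if x == d then Some v else B x].

Definition free_cells n (B : position n) := [set x | B x == None].

Definition buildable (A : nat -> Prop) (k v : nat) :=
  forall n (B : position n) d, B d = None -> k <= #|free_cells B| ->
    reaches A B (put B d v).

Lemma buildable_mono A k k' v : k <= k' -> buildable A k v -> buildable A k' v.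
Proof. by move=> kk' hb n B d Bd k'B; apply: hb => //; apply: leq_trans k'B. Qed.

Lemma buildable1 A k : 0 < k -> buildable A k 1.
Proof.
move=> _ n B d Bd _; apply/step_reaches/stepP; exists d, [::].
by split => // x m; rewrite in_nil.
Qed.

Lemma card_free_put n (B : position n) d v :
  B d = None -> #|free_cells (put B d v)| = #|free_cells B|.-1.
Proof.
move=> Bd; rewrite [in RHS](cardsD1 d) inE Bd eqxx /=; apply: eq_card => x.
by rewrite /free_cells !inE ffunE; case: (eqVneq x d).
Qed.

Lemma card_free_init n : #|free_cells (init_pos n)| = n.
Proof.
by rewrite -[RHS]card_ord; apply: eq_card => x; rewrite inE ffunE.
Qed.

Lemma free_cells_seq n (B : position n) d r :
  B d = None -> 0 < r <= #|free_cells B| ->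
  exists ds, [/\ uniq ds, size ds = r, d \in ds & forall z, z \in ds -> B z = None].
Proof.
move=> Bd /andP [r0]; set F := free_cells B => rB.
have dF : d \in F by rewrite inE Bd.
exists (take r (d :: enum (F :\ d))); split.
- by rewrite take_uniq //= enum_uniq mem_enum setD11.
- rewrite size_takel //= -cardE; have := cardsD1 d F; rewrite dF /=.
  by move=> eF; rewrite eF add1n in rB.
- by case: r r0 {rB} => //= r _; rewrite mem_head.
move=> z /mem_take; rewrite inE mem_enum !inE => /orP [/eqP -> //|/andP [_]].
by move/eqP.
Qed.

Definition fill n (B : position n) (ps : seq ('I_n * nat)) :=
  foldl (fun W p => put W p.1 p.2) B ps.

Lemma fillE n (B : position n) ps x :
  uniq (unzip1 ps) ->
  fill B ps x = if x \in unzip1 ps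
                then Some (nth 0 (unzip2 ps) (index x (unzip1 ps))) else B x.
Proof.
elim: ps B => [|[d v] ps IHps] B //= /andP [dNps ups].
by rewrite IHps // inE ffunE; case: (eqVneq x d) => [->|] //=; rewrite (negbTE dNps).
Qed.

Lemma reaches_fill A n (B : position n) ps :
  uniq (unzip1 ps) -> (forall d, d \in unzip1 ps -> B d = None) ->
  (forall t, t < size ps -> buildable A (#|free_cells B| - t) (nth 0 (unzip2 ps) t)) ->
  reaches A B (fill B ps).
Proof.
elim: ps B => [|[d v] ps IHps] B /=; first by move=> *; apply: reaches_refl.
case/andP => dNps ups Bfree hb.
have Bd : B d = None by apply: Bfree; rewrite mem_head.
apply: reaches_trans (hb 0 isT _ _ _ Bd _) _; rewrite ?subn0 //.
apply: IHps => // [z zps|t tps].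
  rewrite ffunE; case: eqP => [zd|_]; first by rewrite -zd zps in dNps.
  by apply: Bfree; rewrite inE zps orbT.
by rewrite card_free_put // -predn_sub -subnS; apply: hb.
Qed.

Lemma buildable_sum A k vs :
  0 < size vs <= k ->
  (forall t, t < size vs -> buildable A (k - t) (nth 0 vs t)) ->
  A (sumn vs) -> buildable A k (sumn vs).
Proof.
move=> /andP [vs0 vsk] hb Asum n B d Bd kB.
have [ds [uds sds dds Bds]] : exists ds, [/\ uniq ds, size ds = size vs, d \in ds &
    forall z, z \in ds -> B z = None].
  by apply: free_cells_seq => //; rewrite vs0 (leq_trans vsk kB).
have ps1 : unzip1 (zip ds vs) = ds by rewrite unzip1_zip // sds.
have ps2 : unzip2 (zip ds vs) = vs by rewrite unzip2_zip // sds.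
set W := fill B (zip ds vs).
have WE x : W x = if x \in ds then Some (nth 0 vs (index x ds)) else B x.
  by rewrite /W fillE ps1 ?ps2.
set G := [set x in ds].
have sumW : set_sum W G = sumn vs.
  rewrite /set_sum (eq_bigl (fun x => x \in ds)) => [|x]; last by rewrite inE.
  rewrite -big_uniq // (eq_big_seq (fun x => nth 0 vs (index x ds))) => [|x xds].
    rewrite (big_nth d) sumnE [RHS](big_nth 0) sds.
    by apply: eq_big_nat => t /andP [_ tlt]; rewrite index_uniq // sds.
  by rewrite WE xds.
have -> : put B d (sumn vs) = merge W G d.
  apply/ffunP => x; rewrite !ffunE inE WE sumW.
  case: (eqVneq x d) => [->|_]; rewrite ?dds //.
  by case: (boolP (x \in ds)) => xds //; rewrite Bds.
apply: reaches_merge; rewrite ?inE ?sumW //.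
- apply: reaches_fill; rewrite ?ps1 ?ps2 // size_zip sds minnn => t tv.
  by apply: buildable_mono (hb t tv); rewrite leq_sub2r.
- by move/(congr1 (fun W : position n => W d)); rewrite WE dds Bd.
by move=> x; rewrite inE WE => ->.
Qed.

(** * Orders of the tiles of a position *)

Lemma size_uniq_ord n (s : seq 'I_n) : uniq s -> size s <= n.
Proof. by move=> us; rewrite -(card_uniqP us) -[n in _ <= n]card_ord max_card. Qed.

Lemma nth_map_index (T : eqType) (g : T -> nat) (s : seq T) t :
  uniq s -> t < size s ->
  exists2 x, x \in s & index x s = t /\ nth 0 (map g s) t = g x.
Proof.
case: s => // x0 s us lt; exists (nth x0 (x0 :: s) t); first exact: mem_nth.
by rewrite index_uniq // (nth_map x0).
Qed.

Definition tile_order A n (P : position n) (s : seq 'I_n) :=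
  [/\ uniq s, forall x, (x \in s) = (P x != None) &
      forall x, x \in s -> buildable A (n - index x s) (tval (P x))].

Lemma tile_order_reaches A n (P : position n) s :
  tile_order A P s -> reaches A (init_pos n) P.
Proof.
case=> us sP hb; set ps := [seq (x, tval (P x)) | x <- s].
have ps1 : unzip1 ps = s by rewrite /unzip1 -map_comp; apply: map_id.
have ps2 : unzip2 ps = [seq tval (P x) | x <- s] by rewrite /unzip2 -map_comp.
have -> : P = fill (init_pos n) ps.
  apply/ffunP => x; rewrite fillE ps1 ?ps2 // ffunE.
  case: (boolP (x \in s)) => xs; last by apply/eqP; move: xs; rewrite sP negbK.
  rewrite (nth_map x) ?index_mem // nth_index //.
  by move: xs; rewrite sP; case: (P x).
apply: reaches_fill; rewrite ?ps1 ?ps2 //; first by move=> d _; rewrite ffunE.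
move=> t; rewrite card_free_init size_map => ts.
by have [x xs [<- ->]] := nth_map_index (fun x => tval (P x)) us ts; apply: hb.
Qed.

Lemma tile_order_place A n (P : position n) s e :
  tile_order A P s -> P e = None -> tile_order A (place P e) (rcons s e).
Proof.
case=> us sP hb Pe; have eNs : e \notin s by rewrite sP Pe.
have ues : uniq (rcons s e) by rewrite rcons_uniq eNs.
split => // x; rewrite mem_rcons inE ffunE; first by rewrite sP; case: eqP.
rewrite -cats1 index_cat => /orP [/eqP->|xs]; last first.
  have -> : (x == e) = false by apply: contraNF eNs => /eqP <-.
  by rewrite xs; apply: hb.
rewrite eqxx (negbTE eNs) /= eqxx addn0; apply: buildable1.
by have := size_uniq_ord ues; rewrite size_rcons subn_gt0.
Qed.

(* A merged tile takes the place of the oldest tile merged into it. *)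
Lemma tile_order_step A n (P R : position n) e ms s :
  step_with A P R e ms -> tile_order A (place P e) s -> tiles_in A R ->
  tile_order A R (dedup (map (owner ms) s)).
Proof.
move=> sPR [us sQ hb] AR; set s' := dedup _.
have sR x : (x \in s') = (R x != None).
  rewrite mem_dedup; apply/mapP/idP => [[y ys ->]|/eqP Rx].
    by apply/eqP; apply: (tile_owner sPR); apply/eqP; rewrite -sQ.
  exists x; last by rewrite (owner_tile sPR Rx).
  by rewrite sQ; apply/eqP; exact: (place_tile sPR Rx).
split => [|x|x]; [exact: dedup_uniq | exact: sR | rewrite sR => /eqP Rx].
set grp := [seq y <- s | owner ms y == x].
have xgrp : x \in grp.
  rewrite mem_filter (owner_tile sPR Rx) eqxx sQ.
  by apply/eqP; exact: (place_tile sPR Rx).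
have ugrp : uniq grp := filter_uniq _ us.
have idx y : y \in grp -> index x s' + index y grp <= index y s < n.
  rewrite mem_filter => /andP [/eqP oy ys].
  rewrite (leq_trans _ (size_uniq_ord us)) ?index_mem // andbT.
  by have := index_dedup_map (owner ms) us ys; rewrite oy.
have tvR : tval (R x) = sumn [seq tval (place P e y) | y <- grp].
  rewrite (tval_step sPR) sumnE big_map big_filter big_mkcond [RHS]big_mkcond.
  rewrite [RHS]big_uniq //= [RHS]big_mkcond; apply: eq_bigr => y _.
  case: (boolP (y \in s)) => //= ys.
  by move: ys; rewrite sQ negbK => /eqP ->; case: ifP.
rewrite tvR; apply: buildable_sum; rewrite ?size_map -?tvR; last exact: AR.
  have grp0 : 0 < size grp by rewrite -has_predT; apply/hasP; exists x.
  have last_lt : (size grp).-1 < size grp by rewrite ltn_predL.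
  by rewrite grp0 /=; have := idx _ (mem_nth x last_lt); rewrite index_uniq //; lia.
move=> t tgrp.
have [y ygrp [<- ->]] := nth_map_index (fun y => tval (place P e y)) ugrp tgrp.
have := idx y ygrp; move: ygrp; rewrite mem_filter => /andP [_ ys] yle.
by case/andP: yle => le _; apply: buildable_mono (hb y ys); rewrite -subnDA leq_sub2l.
Qed.

Lemma tile_order_delete A m (c : 'I_m.+1) (P : position m.+1) s :
  tile_order A P (c :: s) -> tile_order A (delete_cell c P) (pmap (unlift c) s).
Proof.
case=> /andP [cNs us] sP hb.
have unliftK : ocancel (unlift c) (lift c) by move=> y; case: unliftP.
have memE j : (j \in pmap (unlift c) s) = (lift c j \in s).
  exact: (can2_mem_pmap unliftK (@liftK _ c)).
have liftE : map (lift c) (pmap (unlift c) s) = s.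
  rewrite (pmap_filter unliftK); apply/all_filterP/allP => y ys /=.
  by case: unliftP => // yc; rewrite -yc ys in cNs.
have cNl j : (c == lift c j) = false := negbTE (neq_lift c j).
split => [|j|j]; first exact: (pmap_uniq unliftK).
  by rewrite memE ffunE -sP inE eq_sym cNl.
rewrite memE ffunE => js; have := hb (lift c j); rewrite inE js orbT => /(_ isT).
by rewrite /= cNl -[in index (lift c j) s]liftE (index_map lift_inj) subSS.
Qed.

Lemma reachable_tile_order A n (P : position n) :
  A 1 -> reachable A P -> tiles_in A P /\ exists s, tile_order A P s.
Proof.
move=> A1.
apply: (reaches_ind (I := fun Q => tiles_in A Q /\ exists s, tile_order A Q s))
  => [|X Y [AX [s oX]] /stepP [e [ms sXY]]].
  split => [x|]; first by rewrite ffunE.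
  by exists [::]; split => // x; rewrite ffunE.
have AY := step_tiles_in sXY A1 AX; split => //.
exists (dedup (map (owner ms) (rcons s e))); apply: (tile_order_step sXY) AY.
by apply: tile_order_place oX _; case: sXY.
Qed.

(** * Plays beside a fixed cell *)

Section InsertCell.

Variables (m : nat) (c : 'I_m.+1) (v : nat).
Implicit Types Q R : position m.

Lemma insert_cell_lift Q j : insert_cell c v Q (lift c j) = Q j.
Proof. by rewrite ffunE liftK. Qed.

Lemma insert_cell_c Q : insert_cell c v Q c = Some v.
Proof. by rewrite ffunE unlift_none. Qed.

Lemma insert_cell_init : insert_cell c v (init_pos m) = put (init_pos m.+1) c v.
Proof.
apply/ffunP => x; rewrite [RHS]ffunE; case: (unliftP c x) => [j ->|->].
  by rewrite insert_cell_lift eq_sym (negbTE (neq_lift c j)) !ffunE.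
by rewrite insert_cell_c eqxx.
Qed.

Lemma place_insert_cell Q e :
  place (insert_cell c v Q) (lift c e) = insert_cell c v (place Q e).
Proof.
apply/ffunP => x; case: (unliftP c x) => [j ->|->].
  by rewrite ffunE !insert_cell_lift (inj_eq lift_inj) ffunE.
by rewrite insert_cell_c ffunE (negbTE (neq_lift c e)) insert_cell_c.
Qed.

Lemma set_sum_insert_cell Q (S : {set 'I_m}) :
  set_sum (insert_cell c v Q) (lift c @: S) = set_sum Q S.
Proof.
rewrite /set_sum big_imset /=; last by move=> ? ? _ _; apply: lift_inj.
by apply: eq_bigr => j _; rewrite insert_cell_lift.
Qed.

Lemma step_insert_cell (A : nat -> Prop) Q R :
  step A Q R -> step A (insert_cell c v Q) (insert_cell c v R).
Proof.
case/stepP => e [ms [Qe hm hd hR hF]].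
pose g (mm : {set 'I_m} * 'I_m) := (lift c @: mm.1, lift c mm.2).
apply/stepP; exists (lift c e), (map g ms); split.
- by rewrite insert_cell_lift.
- move=> _ /mapP [mm mmi ->] /=; rewrite place_insert_cell set_sum_insert_cell.
  case: (hm mm mmi) => m2m mQ mA; split => //; first exact: imset_f.
  by move=> _ /imsetP [y ym ->]; rewrite insert_cell_lift; apply: mQ.
- rewrite /merges_disjoint pairwise_map; apply: (sub_pairwise _ hd) => mm mm' /=.
  by rewrite imset_disjoint //; apply: lift_inj.
- move=> _ _ /mapP [mm mmi ->] /imsetP [y ym ->] /=.
  rewrite insert_cell_lift (hR y mm mmi ym) place_insert_cell.
  by rewrite set_sum_insert_cell (inj_eq lift_inj).
move=> x; rewrite place_insert_cell; case: (unliftP c x) => [j ->|->] xfree.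
  rewrite !insert_cell_lift; apply: hF => mm mmi; apply/negP => jm.
  by have := xfree (g mm) (map_f g mmi); rewrite /= mem_imset ?jm //; apply: lift_inj.
by rewrite !insert_cell_c.
Qed.

End InsertCell.

Theorem lemma1 (A : nat -> Prop)
  (hA1 : A 1) (hApos : forall a, A a -> 0 < a)
  (m : nat) (P : position m.+1)
  (hP : reachable A P) (hne : exists i, P i <> None) :
  exists (c : 'I_m.+1) (v : nat),
    P c = Some v /\
    reachable A (insert_cell c v (init_pos m)) /\
    exists (k : nat) (f : nat -> position m),
      [/\ f 0 = init_pos m,
          f k = delete_cell c P &
          forall i, i < k ->
            step A (f i) (f i.+1) /\
            step A (insert_cell c v (f i)) (insert_cell c v (f i.+1))].
Proof.
have [_ [[|c s] ord]] := reachable_tile_order hA1 hP.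
  by case: hne => i /eqP; case: ord => _ <-.
have [_ sP hb] := ord; set v := tval (P c).
have Pc : P c = Some v by move: (sP c); rewrite mem_head /v; case: (P c).
exists c, v; split => //; split.
  rewrite /reachable insert_cell_init; apply: hb; rewrite ?mem_head ?ffunE //.
  by rewrite card_free_init /= eqxx subn0.
have [k [f [f0 fk fs]]] := tile_order_reaches (tile_order_delete ord).
exists k, f; split => // i ik.
by split; [exact: fs | exact: step_insert_cell (fs i ik)].
Qed.
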